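(* Let $A\in\mathbb{R}^{n\times n}$ be symmetric positive definite, $b\in\mathbb{R}^n$, and let the $CD$ method (described in the context) be applied to $Ay=b$ with starting point $y_0\in\mathbb{R}^n$ and real parameters $\gamma_k\neq 0$ for all $k\ge 0$. If the directions $p_0,p_1,\dots,p_k$ ($k\ge 0$) are generated by the method, then they are mutually conjugate, i.e. $p_i^TAp_j=0$ for all $0\le i\neq j\le k$.
   Context: The $CD$ method for solving $Ay=b$, with $A$ symmetric positive definite, starting point $y_0\in\mathbb{R}^n$ and nonzero real parameters $\gamma_0,\gamma_1,\dots$, is the following iteration (all norms Euclidean). Set $r_0=b-Ay_0$; if $r_0=0$ stop; set $p_0=r_0$. For $k=0,1,2,\dots$: compute $a_k=\dfrac{r_k^Tp_k}{p_k^TAp_k}$, $y_{k+1}=y_k+a_kp_k$, $r_{k+1}=r_k-a_kAp_k$; if $r_{k+1}=0$ stop; otherwise set $\sigma_k=\gamma_k\dfrac{\|Ap_k\|^2}{p_k^TAp_k}$ and, if $k=0$, $p_1=\gamma_0Ap_0-\sigma_0p_0$, while if $k\ge1$, $\omega_k=\gamma_k\dfrac{(Ap_k)^T(Ap_{k-1})}{p_{k-1}^TAp_{k-1}}$ and $p_{k+1}=\gamma_kAp_k-\sigma_kp_k-\omega_kp_{k-1}$. *)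

From HB Require Import structures.
From mathcomp Require Import all_boot all_order all_algebra.
Set Implicit Arguments. Unset Strict Implicit. Unset Printing Implicit Defensive.
Import Order.TTheory GRing.Theory Num.Theory.
Local Open Scope ring_scope.

Definition dot (R : realFieldType) (n : nat) (u v : 'cV[R]_n) : R := (u^T *m v) 0 0.

Definition spd (R : realFieldType) (n : nat) (A : 'M[R]_n) : Prop :=
  A^T = A /\ (forall x : 'cV[R]_n, x != 0 -> 0 < dot x (A *m x)).

(* State of the CD iteration at step k: (y_k, r_k, p_k, p_{k-1}),
   with p_{-1} := 0 (never used).  Divisions are MathComp's total ones;
   they are only meaningful while the method has not stopped. *)
Fixpoint cd_state (R : realFieldType) (n : nat) (A : 'M[R]_n) (b y0 : 'cV[R]_n)
    (gam : nat -> R) (k : nat) : 'cV[R]_n * 'cV[R]_n * 'cV[R]_n * 'cV[R]_n :=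
  match k with
  | 0 => let r0 := b - A *m y0 in (y0, r0, r0, 0)
  | k'.+1 =>
    let: (y, r, p, pp) := cd_state A b y0 gam k' in
    let a := dot r p / dot p (A *m p) in
    let y' := y + a *: p in
    let r' := r - a *: (A *m p) in
    let s := gam k' * dot (A *m p) (A *m p) / dot p (A *m p) in
    let p' :=
      if k' is 0 then gam 0 *: (A *m p) - s *: p
      else
        let w := gam k' * dot (A *m p) (A *m pp) / dot pp (A *m pp) in
        gam k' *: (A *m p) - s *: p - w *: pp in
    (y', r', p', p)
  end.

Definition cd_y R n A b y0 gam k := (@cd_state R n A b y0 gam k).1.1.1.
Definition cd_r R n A b y0 gam k := (@cd_state R n A b y0 gam k).1.1.2.
Definition cd_p R n A b y0 gam k := (@cd_state R n A b y0 gam k).1.2.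

(** The directions satisfy the three-term recurrence
    [p_(k+1) = gam_k A p_k - sigma_k p_k - omega_k p_(k-1)], where [sigma_k] and
    [omega_k] are exactly the coefficients making [p_(k+1)] [A]-conjugate to [p_k]
    and [p_(k-1)].  Conjugacy to the older directions [p_i], [i < k - 1], comes for
    free: [p_i^T A p_(k+1)] reduces to [gam_k (A p_i)^T (A p_k)], and
    [gam_i A p_i] is a combination of [p_(i+1)], [p_i], [p_(i-1)], all conjugate
    to [p_k] by induction.  This is why [gam_i <> 0] is needed. *)

From mathcomp Require Import all_boot all_order all_algebra.
Set Implicit Arguments. Unset Strict Implicit. Unset Printing Implicit Defensive.
Import GRing.Theory Num.Theory.
Local Open Scope ring_scope.

Section Dot.
Context {R : realFieldType} {n : nat}.
Implicit Types (u v w : 'cV[R]_n) (A : 'M[R]_n).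

Lemma dotC u v : dot u v = dot v u.
Proof.
rewrite /dot; have -> : v^T *m u = (u^T *m v)^T by rewrite trmx_mul trmxK.
by rewrite [RHS]mxE.
Qed.

Lemma dotDl u v w : dot (u + v) w = dot u w + dot v w.
Proof. by rewrite /dot linearD /= mulmxDl mxE. Qed.

Lemma dotNl u v : dot (- u) v = - dot u v.
Proof. by rewrite /dot linearN /= mulNmx mxE. Qed.

Lemma dotBl u v w : dot (u - v) w = dot u w - dot v w.
Proof. by rewrite dotDl dotNl. Qed.

Lemma dotZl (a : R) u v : dot (a *: u) v = a * dot u v.
Proof. by rewrite /dot linearZ /= -scalemxAl mxE. Qed.

Lemma dot0l v : dot 0 v = 0.
Proof. by rewrite /dot trmx0 mul0mx mxE. Qed.

Definition adot A u v := dot u (A *m v).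

Lemma adotC A u v : A^T = A -> adot A u v = adot A v u.
Proof. by move=> symA; rewrite /adot dotC /dot trmx_mul symA mulmxA. Qed.

Lemma adotBl A u v w : adot A (u - v) w = adot A u w - adot A v w.
Proof. exact: dotBl. Qed.

Lemma adotDl A u v w : adot A (u + v) w = adot A u w + adot A v w.
Proof. exact: dotDl. Qed.

Lemma adotZl A (a : R) u v : adot A (a *: u) v = a * adot A u v.
Proof. exact: dotZl. Qed.

Lemma adot0l A v : adot A 0 v = 0.
Proof. exact: dot0l. Qed.

Lemma divfK_adot A u (x : R) :
  spd A -> (u = 0 -> x = 0) -> x / adot A u u * adot A u u = x.
Proof.
move=> [_ posA] x0; have [u0|u_neq0] := eqVneq u 0.
  by rewrite (x0 u0) !mul0r.
by rewrite divfK // lt0r_neq0 // posA.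
Qed.

End Dot.

Section ConjugateDirections.
Variables (R : realFieldType) (n : nat) (A : 'M[R]_n) (b y0 : 'cV[R]_n).
Variable gam : nat -> R.
Hypothesis A_spd : spd A.
Hypothesis gam_neq0 : forall k, gam k != 0.

Local Notation p := (cd_p A b y0 gam).
Local Notation B := (adot A).

Definition cd_pprev k := (cd_state A b y0 gam k).2.
Local Notation q := cd_pprev.

Definition cd_sigma k := gam k * dot (A *m p k) (A *m p k) / B (p k) (p k).
Definition cd_omega k := gam k * dot (A *m p k) (A *m q k) / B (q k) (q k).

Definition conjugate_upto m := forall i j, (i < j <= m)%N -> B (p i) (p j) = 0.

Lemma cd_pprev0 : q 0 = 0.
Proof. by []. Qed.

Lemma cd_pprevS k : q k.+1 = p k.
Proof. by rewrite /cd_pprev /cd_p /=; case: (cd_state A b y0 gam k) => [[[y r] d] dd]. Qed.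

(* With [p_(-1) = 0] the step [k = 0] is an instance of the general recurrence. *)
Lemma cd_pS k : p k.+1 = gam k *: (A *m p k) - cd_sigma k *: p k - cd_omega k *: q k.
Proof.
case: k => [|k]; first by rewrite cd_pprev0 scaler0 subr0.
rewrite /cd_sigma /cd_omega /cd_pprev /cd_p; move: k.+1 (ltn0Sn k) => {}k k_gt0 /=.
by case: (cd_state A b y0 gam k) => [[[y r] d] dd]; case: k k_gt0.
Qed.

Lemma cd_A_p k : gam k *: (A *m p k) = p k.+1 + cd_sigma k *: p k + cd_omega k *: q k.
Proof. by rewrite cd_pS addrAC !subrK. Qed.

Lemma cd_sigmaK k : cd_sigma k * B (p k) (p k) = gam k * dot (A *m p k) (A *m p k).
Proof. by apply: divfK_adot => // ->; rewrite mulmx0 dot0l mulr0. Qed.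

Lemma cd_omegaK k : cd_omega k * B (q k) (q k) = gam k * dot (A *m p k) (A *m q k).
Proof. by apply: divfK_adot => // ->; rewrite mulmx0 dotC dot0l mulr0. Qed.

Lemma adot_cd_pprev m :
  conjugate_upto m -> forall i j, (i <= j <= m)%N -> B (q i) (p j) = 0.
Proof.
move=> conj_m [|i] j le_ij; first by rewrite cd_pprev0 adot0l.
by rewrite cd_pprevS; apply: conj_m.
Qed.

Lemma dot_A_cd_p m :
  conjugate_upto m -> forall i j, (i.+1 < j <= m)%N -> dot (A *m p i) (A *m p j) = 0.
Proof.
move=> conj_m i j /andP[lt_ij le_jm]; apply/(mulfI (gam_neq0 i)).
have lt_ij' : (i < j)%N by apply: ltnW.
rewrite mulr0 -[dot _ _]/(B (A *m p i) (p j)) -adotZl cd_A_p !adotDl !adotZl.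
rewrite (conj_m i.+1 j) ?lt_ij // (conj_m i j) ?lt_ij' //.
by rewrite (adot_cd_pprev conj_m) ?(ltnW lt_ij') // !mulr0 !addr0.
Qed.

Lemma conjugate_uptoS m : conjugate_upto m -> conjugate_upto m.+1.
Proof.
move=> conj_m i j /andP[lt_ij]; rewrite leq_eqVlt ltnS => /orP[/eqP eq_jm | le_jm];
  last by apply: conj_m; rewrite lt_ij.
subst j.
have symA : A^T = A by case: A_spd.
rewrite adotC // cd_pS !adotBl !adotZl -[B (A *m p m) _]/(dot (A *m p m) (A *m p i)).
move: lt_ij; rewrite ltnS leq_eqVlt => /orP[/eqP-> | lt_im].
  by rewrite (adot_cd_pprev conj_m) ?leqnn // mulr0 subr0 cd_sigmaK subrr.
rewrite [B (p m) (p i)]adotC // (conj_m i m) ?lt_im ?leqnn // mulr0 subr0.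
move: lt_im; rewrite leq_eqVlt => /orP[/eqP<- | lt_i1m].
  by rewrite -[p i]cd_pprevS cd_omegaK cd_pprevS subrr.
case: m conj_m lt_i1m => // m conj_m lt_i1m.
have lt_im : (i < m)%N by rewrite -ltnS.
rewrite dotC (dot_A_cd_p conj_m) ?lt_i1m ?leqnn // cd_pprevS [B (p m) _]adotC //.
by rewrite (conj_m i m) ?lt_im ?leqnSn // !mulr0 subrr.
Qed.

Lemma cd_p_conjugate m : conjugate_upto m.
Proof.
elim: m => [|m /conjugate_uptoS //] i j /andP[lt_ij].
by rewrite leqn0 => /eqP j0; rewrite j0 in lt_ij.
Qed.

End ConjugateDirections.

Theorem theorem1 (R : realFieldType) (n : nat) (A : 'M[R]_n) (b y0 : 'cV[R]_n)
    (gam : nat -> R) (k : nat) :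
  spd A ->
  (forall j : nat, gam j != 0) ->
  (forall j : nat, (j <= k)%N -> cd_r A b y0 gam j != 0) ->
  forall i j : nat, (i <= k)%N -> (j <= k)%N -> i != j ->
    dot (cd_p A b y0 gam i) (A *m cd_p A b y0 gam j) = 0.
Proof.
move=> A_spd gam_neq0 _ i j le_ik le_jk; rewrite -/(adot A _ _).
have conj : conjugate_upto A b y0 gam k by exact: cd_p_conjugate.
have symA : A^T = A by case: A_spd.
case: (ltngtP i j) => [lt_ij _ | lt_ji _ | _ //].
- by apply: (conj i j); rewrite lt_ij.
- by rewrite adotC //; apply: (conj j i); rewrite lt_ji.
Qed.
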